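(* Let $n,k$ be integers with $1 \leq k \leq n$ and let $q$ be a prime power with $q > \binom{n-1}{k-1}$. Then there exists an $[n,k]_q$ MDS code that has a $k \times n$ generator matrix $\mathbf{G}$ over $\mathbb{F}_q$ satisfying both of the following: (C1) (sparsest) each row of $\mathbf{G}$ has Hamming weight $n-k+1$; (C2) (balanced) the Hamming weights of the columns of $\mathbf{G}$ differ from each other by at most one.
   Context: $\mathbb{F}_q$ is the finite field with $q$ elements. The Hamming weight of a vector is the number of its nonzero coordinates; rows and columns of a matrix are regarded as vectors. An $[n,k]_q$ MDS code is a linear code of length $n$ and dimension $k$ over $\mathbb{F}_q$ with minimum distance $n-k+1$. *)

From HB Require Import structures.
From mathcomp Require Import all_boot all_order all_algebra all_field.
Set Implicit Arguments. Unset Strict Implicit. Unset Printing Implicit Defensive.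
Import GRing.Theory.
Local Open Scope ring_scope.

Definition hwt (F : fieldType) (n : nat) (v : 'rV[F]_n) : nat :=
  #|[set i : 'I_n | v 0 i != 0]|.

Definition row_wt (F : fieldType) (m n : nat) (G : 'M[F]_(m, n)) (i : 'I_m) : nat :=
  hwt (row i G).
Definition col_wt (F : fieldType) (m n : nat) (G : 'M[F]_(m, n)) (j : 'I_n) : nat :=
  hwt (col j G)^T.

Definition min_dist_is (F : fieldType) (m n : nat) (G : 'M[F]_(m, n)) (d : nat) : Prop :=
  (exists2 c : 'rV[F]_n, (c <= G)%MS & (c != 0) && (hwt c == d)) /\
  (forall c : 'rV[F]_n, (c <= G)%MS -> c != 0 -> (d <= hwt c)%N).

Definition MDS_generator (F : fieldType) (k n : nat) (G : 'M[F]_(k, n)) : Prop :=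
  \rank G = k /\ min_dist_is G (n - k + 1).

From HB Require Import structures.
From mathcomp Require Import all_boot all_order all_algebra.
From mathcomp Require Import perm zify.
Set Implicit Arguments. Unset Strict Implicit. Unset Printing Implicit Defensive.
Import GRing.Theory.

(* Row i of G is supported on the cyclic window of n - k + 1 columns starting
   at column i n / k (rounded down).  The window starts are evenly spread, so
   every column meets either floor((n-k+1) k / n) windows or one more.  Every
   k-set J of columns has a system of distinct representatives (row i picks a
   column of J inside its window), so the window pattern carries a matrix whose
   J-minor is a permutation matrix.  The entries of the pattern are then fixed
   one at a time: each minor is affine in a single entry, so fixing an entry of
   column j rules out at most one value for each of the C(n-1, k-1) < q k-sets
   containing j.  All k x k minors of the result are nonzero, hence it generates
   an MDS code, and a nonzero codeword supported in a window of size n - k + 1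
   must fill it. *)

Section PeriodicMarks.
Variable mark : nat -> bool.

Definition marks x := \sum_(0 <= y < x) mark y.

Lemma marks0 : marks 0 = 0. Proof. by rewrite /marks big_geq. Qed.

Lemma marksS x : marks x.+1 = marks x + mark x.
Proof. by rewrite /marks big_nat_recr. Qed.

Lemma marks_addn x d : marks x <= marks (x + d) <= marks x + d.
Proof.
elim: d => [|d IH]; first by rewrite addn0; lia.
by rewrite addnS marksS; case: (mark _); lia.
Qed.

Lemma marks_lipschitz x y : marks y <= marks x + (y - x).
Proof.
case: (leqP x y) => [le_xy | lt_yx].
  by have := marks_addn x (y - x); rewrite subnKC //; lia.
by have := marks_addn y (x - y); rewrite subnKC ?(ltnW lt_yx) //; lia.
Qed.

Lemma marks_ivt u d t : marks u <= t < marks (u + d) ->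
  exists y, [/\ u <= y < u + d, mark y & marks y = t].
Proof.
elim: d => [|d IH]; first by rewrite addn0; lia.
rewrite addnS marksS => /andP[le_ut lt_t].
case: (ltnP t (marks (u + d))) => [lt_td | le_dt].
  by have [y [? ? ?]] := IH (introT andP (conj le_ut lt_td)); exists y; split=> //; lia.
by exists (u + d); split; move: lt_t; case: (mark _) => //=; lia.
Qed.

Variables (n k : nat).
Hypothesis mark_periodic : forall x, mark (x + n) = mark x.
Hypothesis marks_period : marks n = k.

Lemma marksDn x : marks (x + n) = marks x + k.
Proof.
elim: x => [|x IH]; first by rewrite add0n marks0.
by rewrite addSn !marksS IH mark_periodic; lia.
Qed.

Lemma marks_mod x : marks x = marks (x %% n) + x %/ n * k.
Proof.
rewrite {1}(divn_eq x n) addnC; elim: (x %/ n) => [|q IH]; first by rewrite !mul0n !addn0.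
by rewrite mulSn addnCA [n + _]addnC marksDn IH; lia.
Qed.

End PeriodicMarks.

Lemma sum_ord_in_intervals m a b c : a <= b <= c ->
  \sum_(i < m) ((a <= i < b) || (c <= i)) = minn b m - minn a m + (m - minn c m).
Proof.
move=> le_abc; elim: m => [|m IH]; first by rewrite big_ord0; lia.
rewrite big_ord_recr /= IH.
by case: (leqP a m); case: (ltnP m b); case: (leqP c m); lia.
Qed.

Lemma card_ord_lt m a : #|[set i : 'I_m | i < a]| = minn a m.
Proof.
have le_0am : 0 <= a <= maxn a m by rewrite leq0n leq_maxl.
rewrite -sum1_card big_mkcond /=.
transitivity (\sum_(i < m) ((0 <= i < a) || (maxn a m <= i))).
  apply: eq_bigr => i _; rewrite inE leq0n /=.
  by have := ltn_ord i; case: (i < a); case: leqP => //=; lia.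
by rewrite sum_ord_in_intervals //; lia.
Qed.

Section Windows.
Variables (n k : nat).
Hypothesis k_gt0 : 0 < k.
Hypothesis k_le_n : k <= n.

Let n_gt0 : 0 < n. Proof. exact: leq_trans k_gt0 k_le_n. Qed.

Definition shift i := i * n %/ k.

Lemma shift0 : shift 0 = 0. Proof. by rewrite /shift mul0n div0n. Qed.

Lemma shiftk : shift k = n. Proof. by rewrite /shift mulnC mulnK. Qed.

Lemma shift_ltS i : shift i < shift i.+1.
Proof.
have -> : shift i < shift i.+1 = ((i * n + k) %/ k <= shift i.+1).
  by rewrite divnDr // divnn k_gt0 addn1.
by apply: leq_div2r; rewrite mulSn; lia.
Qed.

Lemma shift_leB i j : i <= j -> shift i + (j - i) <= shift j.
Proof.
move=> /subnKC <-; elim: (j - i) => [|d IH]; first by rewrite addn0 subnn addn0.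
by have := shift_ltS (i + d); rewrite addnS; lia.
Qed.

Definition in_window i c := (c + n - shift i) %% n < n - k + 1.

Section Matching.
Variable J : {set 'I_n}.
Hypothesis cardJ : #|J| = k.

Let markJ y := y %% n \in [seq val c | c <- enum J].

Let markJ_periodic x : markJ (x + n) = markJ x.
Proof. by rewrite /markJ modnDr. Qed.

Let marksJ_period : marks markJ n = k.
Proof.
rewrite /marks big_mkord -cardJ -sum1_card [RHS]big_mkcond /=; apply: eq_bigr => i _.
by rewrite /markJ modn_small // (mem_map val_inj) mem_enum; case: (i \in J).
Qed.

Local Notation N := (marks markJ).

Lemma window_marks_lt i i' : i < k -> i' < k ->
  N (shift i') + i < N (shift i + (n - k + 1)) + i'.
Proof.
move=> lt_ik lt_i'k; have shift_k := shift_leB (ltnW lt_i'k).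
rewrite shiftk in shift_k.
case: (leqP i' i) => [le_i'i | lt_ii'].
  have := marks_lipschitz markJ (shift i + (n - k + 1)) (shift i' + n).
  rewrite (marksDn markJ_periodic marksJ_period).
  have := shift_leB le_i'i; lia.
have := marks_lipschitz markJ (shift i + (n - k + 1)) (shift i').
have := shift_leB (leq0n i); rewrite shift0; lia.
Qed.

Lemma window_matching : exists sg : 'I_k -> 'I_n,
  injective sg /\ forall i, sg i \in J /\ in_window i (sg i).
Proof.
(* Row i takes the (i + r)-th marked column, which lies in its window; the
   number of marks below a column is determined mod k by the column mod n,
   so distinct rows get distinct columns. *)
pose r := \max_(i < k) (N (shift i) - i).
have le_r (i : 'I_k) : N (shift i) <= i + r.
  by have := @leq_bigmax _ (fun i : 'I_k => N (shift i) - i) i; rewrite /r /=; lia.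
have lt_r (i : 'I_k) : i + r < N (shift i + (n - k + 1)).
  have := window_marks_lt (ltn_ord i) k_gt0; rewrite shift0 marks0.
  have : r <= N (shift i + (n - k + 1)) - i - 1.
    by apply/bigmax_leqP=> i' _; have := window_marks_lt (ltn_ord i) (ltn_ord i'); lia.
  lia.
have /fin_all_exists[y yP] (i : 'I_k) : exists y,
    [/\ shift i <= y < shift i + (n - k + 1), markJ y & N y = i + r].
  by apply: marks_ivt; rewrite le_r lt_r.
have ltn_y i : y i %% n < n by rewrite ltn_pmod.
exists (fun i => Ordinal (ltn_y i)); split.
  move=> i1 i2 /(congr1 val) /= eq_y.
  have marks_modk i : N (y i) %% k = N (y i %% n) %% k.
    by rewrite {1}(marks_mod markJ_periodic marksJ_period) addnC modnMDl.
  have [_ _ y1] := yP i1; have [_ _ y2] := yP i2.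
  have : (i1 + r == i2 + r %[mod k]) by rewrite -y1 -y2 marks_modk eq_y marks_modk.
  by rewrite eqn_modDr !modn_small // => /eqP /val_inj.
move=> i; have [/andP[le_y lt_y] /mapP[c]] := yP i; rewrite mem_enum => cJ eq_c _.
have shift_i := shift_leB (ltnW (ltn_ord i)); rewrite shiftk in shift_i.
split; first by have -> : Ordinal (ltn_y i) = c by apply: val_inj.
rewrite /in_window /= -addnBA ?modnDml; last lia.
have -> : y i + (n - shift i) = (y i - shift i) + n by lia.
by rewrite modnDr modn_small; lia.
Qed.

End Matching.

Lemma shift_lt i : i < k -> shift i < n.
Proof. by move=> lt_ik; have := shift_leB (ltnW lt_ik); rewrite shiftk; lia. Qed.

Lemma card_window i : i < k -> #|[set c : 'I_n | in_window i c]| = n - k + 1.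
Proof.
move=> /shift_lt lt_shift.
have ltn_rot (c : 'I_n) : (c + n - shift i) %% n < n by rewrite ltn_pmod.
pose rot (c : 'I_n) := Ordinal (ltn_rot c).
have rot_inj : injective rot.
  move=> c1 c2 /(congr1 val) /= /eqP; rewrite -!addnBA; try lia.
  by rewrite eqn_modDr !modn_small // => /eqP /val_inj.
have -> : [set c : 'I_n | in_window i c] = rot @^-1: [set d : 'I_n | d < n - k + 1].
  by apply/setP=> c; rewrite !inE.
by rewrite card_preimset // card_ord_lt; lia.
Qed.

(* The number of rows whose window starts before column a, i.e. ceil(a k / n). *)
Definition srank a := (a * k + n.-1) %/ n.

Lemma leq_shift a i : (a <= shift i) = (srank a <= i).
Proof.
rewrite /shift leq_divRL // /srank -[(_ %/ n <= i)]ltnS ltn_divLR // mulSn.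
by apply/idP/idP; lia.
Qed.

Lemma shift_ltn b i : (shift i < b) = (i < srank b).
Proof. by rewrite ltnNge leq_shift -ltnNge. Qed.

Lemma leq_srank a b : a <= b -> srank a <= srank b.
Proof. by move=> le_ab; apply/leq_div2r; rewrite leq_add2r leq_mul2r le_ab orbT. Qed.

Lemma srank0 : srank 0 = 0.
Proof. by rewrite /srank mul0n add0n divn_small //; lia. Qed.

Lemma srankDn x : srank (x + n) = srank x + k.
Proof.
rewrite /srank [RHS]addnC -(divnMDl _ _ n_gt0); congr (_ %/ _); lia.
Qed.

Lemma srank_window x :
  (n - k + 1) * k %/ n <= srank (x + (n - k + 1)) - srank x <= (n - k + 1) * k %/ n + 1.
Proof.
rewrite /srank [(x + _) * k]mulnDl addnAC divnD //.
by case: leqP; move: (_ %/ n) ((n - k + 1) * k %/ n) => q r /=; lia.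
Qed.

Lemma in_window_srank (c : 'I_n) (i : 'I_k) : in_window i c =
  (srank (c.+1 - (n - k + 1)) <= i < srank c.+1) || (srank ((c + n).+1 - (n - k + 1)) <= i).
Proof.
rewrite /in_window -!leq_shift -shift_ltn.
have := shift_lt (ltn_ord i); have := ltn_ord c.
case: (leqP (shift i) c) => [le_sc | lt_cs] lt_cn lt_sn.
  have -> : c + n - shift i = (c - shift i) + n by lia.
  by rewrite modnDr modn_small; [apply/idP/idP | ]; lia.
by rewrite modn_small; [apply/idP/idP | ]; lia.
Qed.

Definition window_count (c : 'I_n) := #|[set i : 'I_k | in_window i c]|.

Lemma window_count_srank (c : 'I_n) :
  exists x, window_count c = srank (x + (n - k + 1)) - srank x.
Proof.
have lt_cn := ltn_ord c.
have srankn : srank n = k by rewrite -[n]add0n srankDn srank0.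
rewrite /window_count -sum1_card big_mkcond /=.
under eq_bigr => i _ do rewrite inE in_window_srank -[if _ then 1 else 0]/(nat_of_bool _).
rewrite sum_ord_in_intervals; last by rewrite !leq_srank //; lia.
have := @leq_srank c.+1 n lt_cn; rewrite srankn.
case: (leqP (n - k + 1) c.+1) => [le_Lc | lt_cL] le_ck.
  have := @leq_srank n ((c + n).+1 - (n - k + 1)) ltac:(lia); rewrite srankn.
  exists (c.+1 - (n - k + 1)); rewrite subnK //; lia.
have := @leq_srank ((c + n).+1 - (n - k + 1)) n ltac:(lia); rewrite srankn.
have -> : c.+1 - (n - k + 1) = 0 by lia.
exists ((c + n).+1 - (n - k + 1)); rewrite srank0.
have -> : (c + n).+1 - (n - k + 1) + (n - k + 1) = c.+1 + n by lia.
rewrite srankDn; lia.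
Qed.

Lemma window_count_balanced (c1 c2 : 'I_n) : window_count c1 <= window_count c2 + 1.
Proof.
have [x1 ->] := window_count_srank c1; have [x2 ->] := window_count_srank c2.
by have := srank_window x1; have := srank_window x2; lia.
Qed.

End Windows.

Local Open Scope ring_scope.

Definition set_entry (R : Type) m n (A : 'M[R]_(m, n)) i j (a : R) : 'M[R]_(m, n) :=
  \matrix_(i', j') if (i' == i) && (j' == j) then a else A i' j'.

Definition agree_off (R : Type) m n (U : {set 'I_m * 'I_n}) (A B : 'M[R]_(m, n)) :=
  forall p, p \notin U -> A p.1 p.2 = B p.1 p.2.

Section DetSetEntry.
Variables (R : fieldType) (k : nat) (A : 'M[R]_k) (i t : 'I_k).

Lemma det_set_entry a :
  \det (set_entry A i t a) = \det A + (a - A i t) * cofactor A i t.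
Proof.
have cofE t' : cofactor (set_entry A i t a) i t' = cofactor A i t'.
  rewrite /cofactor; congr (_ * \det _); apply/matrixP=> u v.
  by rewrite !mxE eq_sym (negbTE (neq_lift i u)).
rewrite !(expand_det_row _ i) (bigD1 t) // [in RHS](bigD1 t) //=.
rewrite addrAC -mulrDl subrKC cofE !mxE !eqxx; congr (_ + _).
by apply: eq_bigr => t' ne_t't; rewrite cofE mxE eqxx (negbTE ne_t't).
Qed.

Lemma det_set_entry_root : \det A != 0 ->
  exists r, forall a, a != r -> \det (set_entry A i t a) != 0.
Proof.
move=> detA; set c := cofactor A i t.
have [c0 | c_neq0] := eqVneq c 0.
  by exists 0 => a _; rewrite det_set_entry -/c c0 mulr0 addr0.
exists (A i t - \det A / c) => a; apply: contraNneq.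
rewrite det_set_entry -/c => /eqP; rewrite addrC addr_eq0 -mulNr => /eqP/(canRL (mulfK c_neq0)).
by move=> <-; rewrite addrC subrK.
Qed.

End DetSetEntry.

Section ColumnSubsets.
Variables (T : finType) (x0 : T) (k : nat) (J : {set T}).
Hypothesis cardJ : #|J| = k.

Lemma nth_enum_set_inj : injective (fun t : 'I_k => nth x0 (enum J) t).
Proof.
move=> t1 t2 /eqP; rewrite nth_uniq ?enum_uniq -?cardE ?cardJ //.
by move/eqP/val_inj.
Qed.

Lemma mem_nth_enum_set (t : 'I_k) : nth x0 (enum J) t \in J.
Proof. by rewrite -mem_enum mem_nth // -cardE cardJ. Qed.

Lemma nth_enum_setP y : y \in J -> exists t : 'I_k, nth x0 (enum J) t = y.
Proof.
move=> yJ; have ltk : (index y (enum J) < k)%N by rewrite -cardJ cardE index_mem mem_enum.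
by exists (Ordinal ltk); rewrite /= nth_index // mem_enum.
Qed.

End ColumnSubsets.

Lemma card_ksets_mem (T : finType) (x : T) k : (0 < k)%N ->
  (#|[set A : {set T} | (#|A| == k) && (x \in A)]| <= 'C(#|T|.-1, k.-1))%N.
Proof.
move=> k_gt0; rewrite -(cardsC1 x) -cards_draws.
set K := [set A : {set T} | _].
have <- : #|[set A :\ x | A in K]| = #|K|.
  apply: card_in_imset => A1 A2; rewrite !inE => /andP[_ xA1] /andP[_ xA2] eqA.
  by rewrite -(setD1K xA1) -(setD1K xA2) eqA.
apply/subset_leq_card/subsetP=> B /imsetP[A]; rewrite !inE => /andP[/eqP cardA xA] ->.
rewrite setDE subsetIr -setDE; rewrite (cardsD1 x A) xA in cardA.
by rewrite -cardA add1n /= eqxx.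
Qed.

Lemma subset_of_card (T : finType) (A : {set T}) m : (m <= #|A|)%N ->
  exists B : {set T}, B \subset A /\ #|B| = m.
Proof.
move=> le_mA; exists [set x in take m (enum A)]; split.
  by apply/subsetP=> x; rewrite inE => /mem_take; rewrite mem_enum.
rewrite cardsE; move/card_uniqP: (take_uniq m (enum_uniq (mem A))) => ->.
by rewrite size_takel // -cardE.
Qed.

Section ColumnMinors.
Variables (F : fieldType) (k n : nat) (j0 : 'I_n).

Definition colsub_set m (J : {set 'I_n}) (A : 'M[F]_(m, n)) : 'M[F]_(m, k) :=
  colsub (fun t : 'I_k => nth j0 (enum J) t) A.

Lemma colsub_set_entry m (J : {set 'I_n}) (A : 'M[F]_(m, n)) i (t : 'I_k) a : #|J| = k ->
  colsub_set J (set_entry A i (nth j0 (enum J) t) a) = set_entry (colsub_set J A) i t a.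
Proof.
move=> cardJ; apply/matrixP=> i' t'; rewrite !mxE.
by rewrite (inj_eq (nth_enum_set_inj (x0 := j0) cardJ)).
Qed.

Lemma colsub_set_entry_notin m (J : {set 'I_n}) (A : 'M[F]_(m, n)) i j a :
  #|J| = k -> j \notin J -> colsub_set J (set_entry A i j a) = colsub_set J A.
Proof.
move=> cardJ jJ; apply/matrixP=> i' t; rewrite !mxE.
case: ifP => // /andP[_ /eqP e]; move: jJ.
by rewrite -e (mem_nth_enum_set _ cardJ).
Qed.

Definition zeros (v : 'rV[F]_n) := [set j : 'I_n | v 0 j == 0].

Lemma hwt_add_zeros (v : 'rV[F]_n) : (hwt v + #|zeros v|)%N = n.
Proof.
rewrite /hwt /zeros -[RHS]card_ord -(cardsC [set j | v 0 j != 0]); congr (_ + _)%N.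
by apply: eq_card => j; rewrite !inE negbK.
Qed.

Lemma hwt0 : hwt (0 : 'rV[F]_n) = 0%N.
Proof. by apply/eqP; rewrite cards_eq0; apply/eqP/setP=> j; rewrite !inE mxE eqxx. Qed.

Variable G : 'M[F]_(k, n).
Hypothesis minors_neq0 : forall J : {set 'I_n}, #|J| = k -> \det (colsub_set J G) != 0.

Lemma codeword_zeros_lt (x : 'rV[F]_k) : x != 0 ->
  (#|zeros (x *m G)| < k)%N.
Proof.
apply: contraNT; rewrite -leqNgt => /subset_of_card[J [zeroJ cardJ]].
have unitG : colsub_set J G \in unitmx by rewrite unitmxE unitfE minors_neq0.
suff xG0 : x *m colsub_set J G = 0 by rewrite -(mulmxK unitG x) xG0 mul0mx.
apply/rowP=> t; rewrite mulmx_colsub !mxE.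
by have := subsetP zeroJ _ (mem_nth_enum_set j0 cardJ t); rewrite inE mxE => /eqP.
Qed.

Hypothesis k_le_n : (k <= n)%N.

Lemma codeword_weight (x : 'rV[F]_k) : x != 0 -> (n - k + 1 <= hwt (x *m G))%N.
Proof. by move=> /codeword_zeros_lt; have := hwt_add_zeros (x *m G); lia. Qed.

Lemma row_support (i : 'I_k) (S : {set 'I_n}) : (#|S| <= n - k + 1)%N ->
  (forall j, j \notin S -> G i j = 0) -> [set j | row i G 0 j != 0] = S.
Proof.
move=> le_S zero_off; apply/eqP; rewrite eqEcard; apply/andP; split.
  by apply/subsetP=> j; rewrite inE mxE; apply: contraR => /zero_off ->; rewrite eqxx.
have e_neq0 : delta_mx 0 i != 0 :> 'rV[F]_k.
  by apply/eqP => /rowP/(_ i)/eqP; rewrite !mxE !eqxx oner_eq0.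
by have := codeword_weight e_neq0; rewrite -rowE; apply: leq_trans.
Qed.

Lemma codeword_min_weight : (0 < k)%N ->
  exists2 x : 'rV[F]_k, x != 0 & (hwt (x *m G) <= n - k + 1)%N.
Proof.
move=> k_gt0; have [|J [_ cardJ]] := subset_of_card (A := [set: 'I_n]) (m := k).
  by rewrite cardsT card_ord.
have unitG : colsub_set J G \in unitmx by rewrite unitmxE unitfE minors_neq0.
pose t0 : 'I_k := Ordinal k_gt0; pose e0 : 'rV[F]_k := delta_mx 0 t0.
have xG : e0 *m invmx (colsub_set J G) *m colsub_set J G = e0 by rewrite mulmxKV.
exists (e0 *m invmx (colsub_set J G)).
  apply: contraPneq xG => ->; rewrite !mul0mx => /rowP/(_ t0).
  by rewrite !mxE !eqxx => /eqP; rewrite eq_sym oner_eq0.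
set x := e0 *m _; set g := fun t : 'I_k => nth j0 (enum J) t.
have sub_zeros : g @: [set~ t0] \subset zeros (x *m G).
  apply/subsetP=> j /imsetP[t]; rewrite !inE => ne_tt0 ->.
  have /rowP/(_ t) := xG; rewrite /colsub_set mulmx_colsub !mxE eqxx => ->.
  by rewrite eq_sym (negbTE ne_tt0).
have := subset_leq_card sub_zeros; rewrite card_imset ?cardsC1 ?card_ord; last first.
  exact: nth_enum_set_inj cardJ.
by have := hwt_add_zeros (x *m G); lia.
Qed.

Lemma mds_of_minors : (0 < k)%N -> MDS_generator G.
Proof.
move=> k_gt0; split.
  apply/eqP/inj_row_free => x xG0; apply/eqP; apply: contraT => /codeword_weight.
  by rewrite xG0 hwt0; lia.
split=> [|_ /submxP[x ->] xG0].
  have [x x_neq0 le_wt] := codeword_min_weight k_gt0.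
  exists (x *m G); first exact: submxMl.
  have ge_wt := codeword_weight x_neq0.
  apply/andP; split; last by rewrite eqn_leq le_wt ge_wt.
  apply: contraTneq ge_wt => ->.
  by rewrite hwt0; lia.
by apply: codeword_weight; apply: contraNneq xG0 => ->; rewrite mul0mx.
Qed.

End ColumnMinors.

Section GenericFilling.
Variables (F : finFieldType) (k n : nat) (j0 : 'I_n).

Local Notation colsub_set := (@colsub_set F k n j0).

Hypothesis few_ksets : forall j : 'I_n,
  (#|[set J : {set 'I_n} | (#|J| == k) && (j \in J)]| < #|F|)%N.

Lemma fill_entry (U : {set 'I_k * 'I_n}) (M : 'M[F]_(k, n)) p : p \in U ->
  (forall J : {set 'I_n}, #|J| = k ->
     exists2 A, agree_off U A M & \det (colsub_set J A) != 0) ->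
  exists a, forall J : {set 'I_n}, #|J| = k ->
    exists2 A, agree_off (U :\ p) A (set_entry M p.1 p.2 a) & \det (colsub_set J A) != 0.
Proof.
case: p => i j pU hyp /=.
have /fin_all_exists[W hW] : forall J : {set 'I_n}, exists A,
    #|J| = k -> agree_off U A M /\ \det (colsub_set J A) != 0.
  move=> J; have [/hyp[A agA detA] | neqJ] := eqVneq #|J| k; first by exists A.
  by exists 0 => /eqP; rewrite (negbTE neqJ).
have /fin_all_exists[r hr] : forall J : {set 'I_n}, exists r, #|J| = k -> j \in J ->
    forall a, a != r -> \det (colsub_set J (set_entry (W J) i j a)) != 0.
  move=> J; have [cardJ | neqJ] := eqVneq #|J| k; last first.
    by exists 0 => /eqP; rewrite (negbTE neqJ).
  have [jJ | njJ] := boolP (j \in J); last by exists 0 => _ /negP.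
  have [t <-] := nth_enum_setP j0 cardJ jJ.
  have [r hr] := det_set_entry_root i t (hW J cardJ).2.
  by exists r => _ _ a /hr; rewrite colsub_set_entry.
pose Kj := [set J : {set 'I_n} | (#|J| == k) && (j \in J)].
have [a ra] : exists a, a \notin [set r J | J in Kj].
  have /properP[_ [a _ ra]] : [set r J | J in Kj] \proper [set: F].
    by rewrite properEcard subsetT cardsT (leq_ltn_trans (leq_imset_card _ _) (few_ksets j)).
  by exists a.
exists a => J cardJ; exists (set_entry (W J) i j a).
  move=> q; rewrite !inE !mxE negb_and negbK => /orP[/eqP -> | qU]; first by rewrite /= !eqxx.
  by case: ifP => // _; apply: (hW J cardJ).1.
have [jJ | njJ] := boolP (j \in J).
  apply: hr => //; apply: contraNneq ra => ->.
  by apply: imset_f; rewrite inE cardJ eqxx.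
by rewrite colsub_set_entry_notin // (hW J cardJ).2.
Qed.

Lemma fill_entries (U : {set 'I_k * 'I_n}) (M : 'M[F]_(k, n)) :
  (forall J : {set 'I_n}, #|J| = k ->
     exists2 A, agree_off U A M & \det (colsub_set J A) != 0) ->
  exists2 G, agree_off U G M & forall J : {set 'I_n}, #|J| = k -> \det (colsub_set J G) != 0.
Proof.
move: {2}#|U| (erefl #|U|) => m; elim: m U M => [|m IH] U M cardU hyp.
  have U0 : U = set0 by apply/eqP; rewrite -cards_eq0 cardU.
  exists M => // J cardJ; have [A agA detA] := hyp J cardJ.
  suff <- : A = M by [].
  by apply/matrixP=> i j; apply: (agA (i, j)); rewrite U0 inE.
have [[i j] pU] : exists p, p \in U by apply/set0Pn; rewrite -card_gt0 cardU.
have [a ha] := fill_entry pU hyp.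
have [|G agG detG] := IH (U :\ (i, j)) _ _ ha; first by move: cardU; rewrite (cardsD1 (i, j) U) pU => -[].
exists G => // q qU; rewrite agG; last by rewrite !inE negb_and qU orbT.
rewrite mxE; case: ifP => // /andP[/eqP eq1 /eqP eq2].
by move: qU; rewrite [q]surjective_pairing eq1 eq2 pU.
Qed.

End GenericFilling.

Lemma window_minor (F : fieldType) n k (j0 : 'I_n) :
  (0 < k)%N -> (k <= n)%N -> forall J : {set 'I_n}, #|J| = k ->
  exists2 A : 'M[F]_(k, n), agree_off [set p : 'I_k * 'I_n | in_window n k p.1 p.2] A 0
                          & \det (colsub_set k j0 J A) != 0.
Proof.
move=> k_gt0 k_le_n J cardJ; have [sg [sg_inj sgP]] := window_matching k_gt0 k_le_n cardJ.
pose A : 'M[F]_(k, n) := \matrix_(i, j) (j == sg i)%:R.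
exists A.
  move=> [i j]; rewrite inE !mxE /=; case: eqP => // ->.
  by rewrite (sgP i).2.
have /fin_all_exists[tau tauP] i : exists t : 'I_k, nth j0 (enum J) t = sg i.
  exact: nth_enum_setP (sgP i).1.
have tau_inj : injective tau by move=> i1 i2 eq_tau; apply: sg_inj; rewrite -!tauP eq_tau.
suff -> : colsub_set k j0 J A = perm_mx (perm tau_inj).
  by rewrite det_perm signr_eq0.
apply/matrixP=> i t; rewrite !mxE permE -tauP.
by rewrite (inj_eq (nth_enum_set_inj (x0 := j0) cardJ)) eq_sym.
Qed.

Theorem mainTheorem1 (F : finFieldType) (n k : nat) :
  (1 <= k)%N -> (k <= n)%N -> ('C(n.-1, k.-1) < #|F|)%N ->
  exists G : 'M[F]_(k, n),
    [/\ MDS_generator G,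
        (forall i : 'I_k, row_wt G i = n - k + 1)%N
      & (forall j1 j2 : 'I_n, col_wt G j1 <= col_wt G j2 + 1)%N].
Proof.
move=> k_gt0 k_le_n lt_binom_q; have j0 : 'I_n := Ordinal (leq_trans k_gt0 k_le_n).
have few_ksets (j : 'I_n) : (#|[set J : {set 'I_n} | (#|J| == k) && (j \in J)]| < #|F|)%N.
  by apply: leq_ltn_trans lt_binom_q; rewrite -[n in 'C(n.-1, _)]card_ord card_ksets_mem.
have [G suppG minorsG] := fill_entries few_ksets (window_minor F j0 k_gt0 k_le_n).
have rowG (i : 'I_k) : [set j | row i G 0 j != 0] = [set j : 'I_n | in_window n k i j].
  apply: (row_support minorsG k_le_n) => [|j]; first by rewrite card_window.
  by rewrite inE => out_ij; rewrite (suppG (i, j)) ?mxE // inE.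
exists G; split.
- exact: mds_of_minors minorsG k_le_n k_gt0.
- by move=> i; rewrite /row_wt /hwt rowG card_window.
have colG (j : 'I_n) : col_wt G j = window_count k j.
  rewrite /col_wt /hwt /window_count; apply: eq_card => i; rewrite !inE !mxE.
  by have /setP/(_ j) := rowG i; rewrite !inE mxE.
by move=> j1 j2; rewrite !colG (window_count_balanced k_gt0 k_le_n).
Qed.
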